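(* Let $f\in\mathscr{F}_r$ with $r$-decomposition $(V_i,f_i)_{i=1}^m$, let $S\subseteq V$ be nonempty, $T\subseteq V\setminus S$ and $u\in V\setminus S$. If $f^S(u\mid T)>0$, then $\{u\}$ is connected to $S$, i.e. $u$ is adjacent in $G$ to some vertex of $S$.
   Context: $V$ is a finite set. Supermodular: $g(A)+g(B)\le g(A\cup B)+g(A\cap B)$; monotone: $g(B)\le g(A)$ for $B\subseteq A$. $\mathscr{F}_r$ is the family of nonnegative monotone supermodular $f:2^V\to\mathbb{R}_+$ admitting an $r$-decomposition $(V_i,f_i)_{i=1}^m$: $V_i\subseteq V$, $|V_i|\le r$, nonnegative supermodular $f_i:2^{V_i}\to\mathbb{R}_+$, $f(S)=\sum_i f_i(S\cap V_i)$. The graph $G=(V,E)$ has $E=\bigcup_i\{uv:\{u,v\}\subseteq V_i,u\ne v\}$. For nonempty $S$: $I_S=\{i:V_i\cap S\ne\emptyset\}$, $f^S(T)=\sum_{i\in I_S}\big(f_i((S\cup T)\cap V_i)-f_i(S\cap V_i)\big)$ for $T\subseteq V\setminus S$, and $f^S(u\mid T)=f^S(T\cup\{u\})-f^S(T)$. *)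

From mathcomp Require Import all_boot all_order all_algebra.
Set Implicit Arguments. Unset Strict Implicit. Unset Printing Implicit Defensive.
Import Order.TTheory GRing.Theory Num.Theory.
Local Open Scope ring_scope.

Section Defs.
Variables (R : realFieldType) (V : finType).

Definition supermodular (g : {set V} -> R) : Prop :=
  forall A B : {set V}, g A + g B <= g (A :|: B) + g (A :&: B).

Definition monotone (g : {set V} -> R) : Prop :=
  forall A B : {set V}, B \subset A -> g B <= g A.

Definition nonneg (g : {set V} -> R) : Prop := forall A : {set V}, 0 <= g A.

(* A set function on 2^{V_i} is represented by g : {set V} -> R, of which only
   the values on subsets of V_i matter. *)
Definition nonneg_on (W : {set V}) (g : {set V} -> R) : Prop :=
  forall A : {set V}, A \subset W -> 0 <= g A.

Definition supermodular_on (W : {set V}) (g : {set V} -> R) : Prop :=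
  forall A B : {set V}, A \subset W -> B \subset W ->
    g A + g B <= g (A :|: B) + g (A :&: B).

Definition r_decomposition (r m : nat) (f : {set V} -> R)
    (Vs : 'I_m -> {set V}) (fs : 'I_m -> {set V} -> R) : Prop :=
  [/\ forall i, (#|Vs i| <= r)%N,
      forall i, nonneg_on (Vs i) (fs i),
      forall i, supermodular_on (Vs i) (fs i)
    & forall S : {set V}, f S = \sum_(i < m) fs i (S :&: Vs i)].

Definition in_Fr_with (r m : nat) (f : {set V} -> R)
    (Vs : 'I_m -> {set V}) (fs : 'I_m -> {set V} -> R) : Prop :=
  [/\ nonneg f, monotone f, supermodular f & r_decomposition r f Vs fs].

Definition adjacent (m : nat) (Vs : 'I_m -> {set V}) (u v : V) : Prop :=
  u != v /\ exists i : 'I_m, (u \in Vs i) && (v \in Vs i).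

Definition I_S (m : nat) (Vs : 'I_m -> {set V}) (S : {set V}) : {set 'I_m} :=
  [set i | Vs i :&: S != set0].

Definition fS (m : nat) (Vs : 'I_m -> {set V}) (fs : 'I_m -> {set V} -> R)
    (S T : {set V}) : R :=
  \sum_(i in I_S Vs S) (fs i ((S :|: T) :&: Vs i) - fs i (S :&: Vs i)).

Definition fS_marg (m : nat) (Vs : 'I_m -> {set V}) (fs : 'I_m -> {set V} -> R)
    (S : {set V}) (u : V) (T : {set V}) : R :=
  fS Vs fs S (u |: T) - fS Vs fs S T.

End Defs.

(* If u lies in no V_i meeting S, adding u to T leaves every term of f^S
   unchanged, so f^S(u | T) = 0; otherwise any vertex of V_i ∩ S is a
   neighbour of u. *)
From mathcomp Require Import all_boot all_order all_algebra.
Import Order.TTheory GRing.Theory Num.Theory.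
Local Open Scope ring_scope.

Section Marginal.
Variables (R : realFieldType) (V : finType) (m : nat).
Variables (Vs : 'I_m -> {set V}) (fs : 'I_m -> {set V} -> R).

Lemma setU1I_notin (u : V) (A W : {set V}) :
  u \notin W -> (u |: A) :&: W = A :&: W.
Proof.
move=> uW; apply/setP => x; rewrite !inE.
by case: (eqVneq x u) => [->|//]; rewrite (negbTE uW) !andbF.
Qed.

Lemma fS_marg_eq0 (S T : {set V}) (u : V) :
  (forall i, i \in I_S Vs S -> u \notin Vs i) -> fS_marg Vs fs S u T = 0.
Proof.
move=> uVs; apply/eqP; rewrite subr_eq0; apply/eqP/eq_bigr => i iS.
by rewrite setUCA setU1I_notin ?uVs.
Qed.

Lemma adjacent_of_I_S (S : {set V}) (u : V) (i : 'I_m) :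
  i \in I_S Vs S -> u \in Vs i -> u \notin S ->
  exists2 v : V, v \in S & adjacent Vs u v.
Proof.
rewrite inE => /set0Pn[v]; rewrite inE => /andP[vVi vS] uVi uS.
exists v => //; split; last by exists i; rewrite uVi vVi.
by apply: contraNneq uS => ->.
Qed.

End Marginal.

Theorem lemma4 (R : realFieldType) (V : finType) (r m : nat)
    (f : {set V} -> R) (Vs : 'I_m -> {set V}) (fs : 'I_m -> {set V} -> R)
    (hF : in_Fr_with r f Vs fs)
    (S T : {set V}) (u : V)
    (hS : S != set0) (hT : T \subset ~: S) (hu : u \notin S)
    (hpos : 0 < fS_marg Vs fs S u T) :
  exists2 v : V, v \in S & adjacent Vs u v.
Proof.
have [/exists_inP[i iS uVi] | /exists_inPn uVs] :=
  boolP [exists i in I_S Vs S, u \in Vs i].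
  exact: adjacent_of_I_S iS uVi hu.
by move: hpos; rewrite fS_marg_eq0 // ltxx.
Qed.
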